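(* In the odd setting below, the determinant $D_k=\det N_k=\det(F^{(k)}_0,F^{(k)}_1,\dots,F^{(k)}_{2s})$ is invariant under the scaling, i.e. it is homogeneous of degree $0$.
   Context: Odd setting: integers $n\ge1$, $s\ge1$, $m=2s+1$; $a_k^0,\dots,a_k^{2s}$ are $n\times n$ matrices with indeterminate entries, $N$-periodic in $k$. $Q_k$ is the $mn\times mn$ block matrix with $I_n$ in blocks $(i+1,i)$, last block column $(a_k^0;\dots;a_k^{2s})$, $O_n$ elsewhere. $r_k=(a_k^0;O_n;a_k^2;O_n;\dots;O_n;a_k^{2s})$. $F^{(k)}_0=r_k$, $F^{(k)}_\ell=Q_k\cdots Q_{k+\ell-1}r_{k+\ell}$, $N_k=(F^{(k)}_0,\dots,F^{(k)}_{2s})$. The scaling, for $\mu>0$: $a_j^{2r+1}\mapsto\mu^{-1+r/s}a_j^{2r+1}$ ($r=0,\dots,s-1$) and $a_j^{2r}\mapsto\mu^{r/s}a_j^{2r}$ ($r=0,\dots,s$), for all $j$. A function of the entries is homogeneous of degree $d\in\mathbb Q$ if the scaling multiplies it by $\mu^d$ for all $\mu>0$. *)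

From HB Require Import structures.
From mathcomp Require Import all_boot all_order all_algebra.
Set Implicit Arguments. Unset Strict Implicit. Unset Printing Implicit Defensive.
Import Order.TTheory GRing.Theory Num.Theory.
Local Open Scope ring_scope.

(* Setting: m = 2s+1 block indices 0..2s, matrices a k l = a_k^l (n x n),
   k an integer. Block matrices of size mn x mn are represented with
   mathcomp's block-matrix type of size \sum_(i < m) n. *)

Section Odd.
Variables (R : comUnitRingType) (n s : nat).
Notation m := (s.*2.+1).
Notation S := (\sum_(i < m) n)%N.
Variable a : int -> 'I_m -> 'M[R]_n.

Definition Qmat (k : int) : 'M[R]_(S, S) :=
  \mxblock_(i < m, j < m)
    (if j == ord_max then a k i
     else if val i == (val j).+1 then 1%:M else 0 : 'M[R]_n).

Definition rvec (k : int) : 'M[R]_(S, n) :=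
  \mxcol_(i < m) (if odd i then 0 else a k i).

Fixpoint Qprod (k : int) (l : nat) : 'M[R]_(S, S) :=
  match l with
  | O => 1%:M
  | l'.+1 => Qprod k l' *m Qmat (k + l'%:Z)
  end.

Definition Fvec (k : int) (l : nat) : 'M[R]_(S, n) :=
  Qprod k l *m rvec (k + l%:Z).

Definition Nmat (k : int) : 'M[R]_(S, S) :=
  \mxrow_(l < m) Fvec k l.

Definition Dk (k : int) : R := \det (Nmat k).
End Odd.

(* The scaling with parameter mu > 0, written via lambda = mu^(1/s) > 0
   (so mu^(r/s) = lambda^r):
   a_j^{2r+1} |-> mu^{-1} lambda^r a_j^{2r+1},  a_j^{2r} |-> lambda^r a_j^{2r}. *)
Definition scaled (R : numFieldType) (n s : nat)
  (a : int -> 'I_(s.*2.+1) -> 'M[R]_n) (mu lambda : R) :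
  int -> 'I_(s.*2.+1) -> 'M[R]_n :=
  fun k l => (if odd l then mu^-1 * lambda ^+ (l./2) else lambda ^+ (l./2)) *: a k l.

From HB Require Import structures.
From mathcomp Require Import all_boot all_order all_algebra.
From mathcomp Require Import ring.
Set Implicit Arguments. Unset Strict Implicit. Unset Printing Implicit Defensive.
Import Order.TTheory GRing.Theory Num.Theory.
Local Open Scope ring_scope.

(* Split Q_k = T_k + r_k E, where E selects the last block and T_k keeps only
   the odd coefficients of the last block column. Each F^{(k)}_l is then
   G^{(k)}_l := T_k ... T_{k+l-1} r_{k+l} plus a combination of the earlier
   G^{(k)}_{l'}, so N_k = G_k U_k with U_k block unitriangular and
   D_k = det G_k. With nu^2 = lambda and X = diag(nu^i), the scaling acts by
   T'_k X = nu^-1 X T_k and r'_k = X r_k, hence G'_k = X G_k X^-1. *)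

Section UnitriangularReduction.
Variables (R : comUnitRingType) (n s : nat).
Notation m := (s.*2.+1).
Notation S := (\sum_(i < m) n)%N.
Variable a : int -> 'I_m -> 'M[R]_n.

Definition Qodd (k : int) : 'M[R]_(S, S) :=
  \mxblock_(i < m, j < m)
    (if j == ord_max then (if odd i then a k i else 0)
     else if val i == (val j).+1 then 1%:M else 0 : 'M[R]_n).

Definition lastblock : 'M[R]_(n, S) :=
  \mxrow_(j < m) (if j == ord_max then 1%:M else 0 : 'M[R]_n).

Lemma Qmat_Qodd k : Qmat a k = Qodd k + rvec a k *m lastblock.
Proof.
rewrite /rvec /lastblock mul_mxcol_mxrow /Qodd /Qmat -mxblockD.
apply: eq_mxblock => i j.
by case: eqP => _; case: (odd i); rewrite ?mulmx1 ?mulmx0 ?mul0mx ?addr0 ?add0r.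
Qed.

Lemma Qprod_recl k l : Qprod a k l.+1 = Qmat a k *m Qprod a (k + 1) l.
Proof.
elim: l => [|l IH] /=; first by rewrite mul1mx mulmx1 addr0.
rewrite /= in IH; rewrite IH -mulmxA; congr (_ *m (_ *m Qmat a _)).
by rewrite intS addrA.
Qed.

Lemma Fvec_recl k l : Fvec a k l.+1 = Qmat a k *m Fvec a (k + 1) l.
Proof. by rewrite /Fvec Qprod_recl mulmxA intS addrA. Qed.

Fixpoint Gvec (k : int) (l : nat) : 'M[R]_(S, n) :=
  if l is l'.+1 then Qodd k *m Gvec (k + 1) l' else rvec a k.

Fixpoint Fcoef (k : int) (l l' : nat) : 'M[R]_n :=
  match l, l' with
  | O, O => 1%:M
  | O, _.+1 => 0
  | l1.+1, O => lastblock *m Fvec a (k + 1) l1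
  | l1.+1, l1'.+1 => Fcoef (k + 1) l1 l1'
  end.

Lemma Fcoef_id k l : Fcoef k l l = 1%:M.
Proof. by elim: l k => [|l IH] k //=. Qed.

Lemma Fcoef_lt k l l' : (l < l')%N -> Fcoef k l l' = 0.
Proof. by elim: l k l' => [|l IH] k [|l'] //= /IH. Qed.

Lemma Fvec_sum_Gvec M k l : (l < M)%N ->
  Fvec a k l = \sum_(l' < M) Gvec k l' *m Fcoef k l l'.
Proof.
elim: l k M => [|l IH] k [|M] // ltlM; rewrite (big_ord_recl M) /=.
  rewrite [X in _ + X]big1 => [|i _]; last by rewrite mulmx0.
  by rewrite mulmx1 /Fvec /= mul1mx !addr0.
under [X in _ + X]eq_bigr do rewrite -mulmxA.
by rewrite -mulmx_sumr -IH // Fvec_recl Qmat_Qodd mulmxDl -mulmxA addrC.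
Qed.

Definition Gmat (k : int) : 'M[R]_(S, S) := \mxrow_(l < m) Gvec k l.

Definition Fcoef_mx (k : int) : 'M[R]_(S, S) :=
  \mxblock_(l' < m, l < m) Fcoef k l l'.

Lemma Nmat_Gmat k : Nmat a k = Gmat k *m Fcoef_mx k.
Proof.
rewrite /Gmat /Fcoef_mx mul_mxrow_mxblock /Nmat; apply: eq_mxrow => l.
exact: Fvec_sum_Gvec.
Qed.

Lemma det_Fcoef_mx k : \det (Fcoef_mx k) = 1.
Proof.
rewrite -det_tr /Fcoef_mx tr_mxblock det_trig; last first.
  apply/is_trig_mxblockP; split=> [i j ltij|i]; first by rewrite Fcoef_lt ?trmx0.
  by rewrite Fcoef_id trmx1 scalar_mx_is_trig.
by apply: big1 => p _; rewrite /mxblock mxE Fcoef_id trmx1 mxE eqxx.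
Qed.

Lemma Dk_det_Gmat k : Dk a k = \det (Gmat k).
Proof. by rewrite /Dk Nmat_Gmat det_mulmx det_Fcoef_mx mulr1. Qed.

End UnitriangularReduction.

Lemma scale_mxblock (R : pzRingType) p q (p_ : 'I_p -> nat) (q_ : 'I_q -> nat)
  (c : R) (B_ : forall i j, 'M[R]_(p_ i, q_ j)) :
  c *: \mxblock_(i, j) B_ i j = \mxblock_(i, j) (c *: B_ i j).
Proof. by apply/matrixP => i j; rewrite /mxblock !mxE. Qed.

Lemma expr_odd_half (R : pzSemiRingType) (x : R) i :
  x ^+ i = (if odd i then x else 1) * (x ^+ 2) ^+ i./2.
Proof.
rewrite -{1}(odd_double_half i) exprD -muln2 mulnC exprM.
by case: (odd i); rewrite ?expr1 ?expr0.
Qed.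

Section PowerDiagonal.
Variables (R : comPzRingType) (n p : nat).

Definition powdiag (x : R) : 'M[R]_(\sum_(i < p) n) :=
  \mxdiag_(i < p) ((x ^+ i)%:M : 'M[R]_n).

Lemma mul_powdiag x y : powdiag x *m powdiag y = powdiag (x * y).
Proof.
rewrite /powdiag {2 3}/mxdiag mul_mxdiag_mxblock; apply: eq_mxblock => i j.
by case: eqP; rewrite ?mulmx0 // !conform_mx_id mul_scalar_mx scale_scalar_mx exprMn.
Qed.

Lemma powdiag1 : powdiag 1 = 1%:M.
Proof.
by rewrite /powdiag; under eq_mxdiag do rewrite expr1n; rewrite mxdiagZ.
Qed.

End PowerDiagonal.

Section Scaling.
Variables (R : numFieldType) (n s : nat).
Notation m := (s.*2.+1).
Variable a : int -> 'I_m -> 'M[R]_n.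
Variables (mu lambda nu : R).
Hypotheses (nu_neq0 : nu != 0) (nu_sqr : nu ^+ 2 = lambda) (lambda_mu : lambda ^+ s = mu).

Let a' := scaled a mu lambda.
Let X := powdiag n m nu.

Lemma Qodd_scaled k : Qodd a' k *m X = nu^-1 *: (X *m Qodd a k).
Proof.
rewrite /Qodd mul_mxblock_mxdiag mul_mxdiag_mxblock scale_mxblock.
apply: eq_mxblock => i j; case: eqP => [->|_].
  case odd_i: (odd i); rewrite ?mul0mx ?mulmx0 ?scaler0 //.
  rewrite /a' /scaled odd_i mul_mx_scalar mul_scalar_mx !scalerA; congr (_ *: _).
  have lambda_neq0 : lambda != 0 by rewrite -nu_sqr expf_neq0.
  (* the last block has index 2s, where nu^(2s) = lambda^s = mu *)
  rewrite /= expr_odd_half (expr_odd_half _ i) odd_i /= odd_double doubleK.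
  by rewrite nu_sqr -lambda_mu; field; rewrite nu_neq0 expf_neq0.
case: eqP => [ij|_]; rewrite ?mul0mx ?mulmx0 ?scaler0 //.
by rewrite mul1mx mulmx1 scale_scalar_mx ij exprS mulrA mulVf // mul1r.
Qed.

Lemma rvec_scaled k : rvec a' k = X *m rvec a k.
Proof.
rewrite /rvec /X /powdiag mul_mxdiag_mxcol; apply: eq_mxcol => i.
case odd_i: (odd i); rewrite ?mulmx0 // mul_scalar_mx /a' /scaled odd_i.
by rewrite (expr_odd_half nu) odd_i mul1r nu_sqr.
Qed.

Lemma Gvec_scaled l k : Gvec a' k l = nu ^- l *: (X *m Gvec a k l).
Proof.
elim: l k => [|l IH] k /=; first by rewrite expr0 invr1 scale1r rvec_scaled.
rewrite IH -scalemxAr mulmxA Qodd_scaled -scalemxAl scalerA -mulmxA.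
by rewrite exprSr invfM mulrC.
Qed.

Lemma Gmat_scaled k : Gmat a' k = X *m Gmat a k *m powdiag n m nu^-1.
Proof.
rewrite /Gmat mul_mxrow mul_mxrow_mxdiag; apply: eq_mxrow => l.
by rewrite Gvec_scaled mul_mx_scalar exprVn.
Qed.

Lemma Dk_scaled k : Dk a' k = Dk a k.
Proof.
rewrite !Dk_det_Gmat Gmat_scaled !det_mulmx mulrAC -det_mulmx.
by rewrite mul_powdiag mulfV // powdiag1 det1 mul1r.
Qed.

End Scaling.

Theorem mainTheorem7 (R : rcfType) (n s N : nat) :
  (0 < n)%N -> (0 < s)%N -> (0 < N)%N ->
  forall a : int -> 'I_(s.*2.+1) -> 'M[R]_n,
  (forall k, a (k + N%:Z) = a k) ->
  forall (mu : R), 0 < mu ->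
  forall (lambda : R), 0 < lambda -> lambda ^+ s = mu ->
  forall k : int,
    Dk (scaled a mu lambda) k = Dk a k.
Proof.
move=> _ _ _ a _ mu _ lambda lambda_gt0 lambda_mu k.
have nu_neq0 : Num.sqrt lambda != 0 by rewrite gt_eqF // sqrtr_gt0.
have nu_sqr : Num.sqrt lambda ^+ 2 = lambda by rewrite sqr_sqrtr // ltW.
exact: Dk_scaled nu_neq0 nu_sqr lambda_mu k.
Qed.
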